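(* Let $N$ be a weakly connected forward-backward conflict free Petri net without self-loops having at least one proper source place or at least one proper sink place. If the only-sink marking $M_d$ is reachable from the only-source marking $M_0$, then $N$ is acyclic.
   Context: A Petri net $N=(P,T,{}^\bullet(-),(-)^\bullet)$ consists of disjoint finite sets $P$ (places) and $T$ (transitions) and functions ${}^\bullet(-),(-)^\bullet\colon T\to\mathcal P(P)$ giving inputs and outputs of each transition; arcs $p\to t$ iff $p\in{}^\bullet t$, $t\to p$ iff $p\in t^\bullet$. For a place $p$, ${}^\bullet p=\{t:p\in t^\bullet\}$, $p^\bullet=\{t:p\in{}^\bullet t\}$. No self-loops: no place is both input and output of the same transition. FBCF: $|{}^\bullet p|\le1$ and $|p^\bullet|\le1$ for all places. A source is a place with ${}^\bullet p=\emptyset$, a sink one with $p^\bullet=\emptyset$; a proper source is a source with $p^\bullet\ne\emptyset$, a proper sink a sink with ${}^\bullet p\neq\emptyset$. $N$ is weakly connected if its underlying undirected graph is connected, and acyclic if it has no directed cycle. A marking is $M\colon P\to\mathbb N$; $t$ is enabled if $M(p)\ge1$ for all $p\in{}^\bullet t$, and firing it subtracts one token from each $p\in{}^\bullet t$ and adds one to each $p\in t^\bullet$. $M$ is reachable from $M_0$ if obtained by a finite sequence of firings of enabled transitions. $M_0(p)=1$ if $p$ is a source, $0$ otherwise; $M_d(p)=1$ if $p$ is a sink, $0$ otherwise. *)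

From mathcomp Require Import all_boot.
Set Implicit Arguments. Unset Strict Implicit. Unset Printing Implicit Defensive.

(* A Petri net: places are a finType P, transitions a finType T (disjoint
   since they are different types), with input sets pre t = •t and output
   sets post t = t•. *)
Record petri_net (P T : finType) := PetriNet {
  pre  : T -> {set P};
  post : T -> {set P} }.

Section PN.
Variables (P T : finType) (N : petri_net P T).

Definition pre_place (p : P) : {set T} := [set t | p \in post N t].
Definition post_place (p : P) : {set T} := [set t | p \in pre N t].

Definition no_self_loops : Prop :=
  forall t : T, [disjoint pre N t & post N t].

Definition FBCF : Prop :=
  forall p : P, #|pre_place p| <= 1 /\ #|post_place p| <= 1.

Definition is_source (p : P) : bool := pre_place p == set0.
Definition is_sink (p : P) : bool := post_place p == set0.
Definition proper_source (p : P) : bool := is_source p && (post_place p != set0).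
Definition proper_sink (p : P) : bool := is_sink p && (pre_place p != set0).

Definition arc (x y : P + T) : bool :=
  match x, y with
  | inl p, inr t => p \in pre N t
  | inr t, inl p => p \in post N t
  | _, _ => false
  end.

Definition weakly_connected : Prop :=
  forall x y : P + T, connect (fun a b => arc a b || arc b a) x y.

Definition acyclic : Prop :=
  forall x y : P + T, arc x y -> ~~ connect arc y x.

Definition marking := {ffun P -> nat}.

Definition enabled (M : marking) (t : T) : bool :=
  [forall p in pre N t, 0 < M p].

Definition fire (M : marking) (t : T) : marking :=
  [ffun p => M p - (p \in pre N t) + (p \in post N t)].

Inductive reachable (M0 : marking) : marking -> Prop :=
  | reach_refl : reachable M0 M0
  | reach_step M t : reachable M0 M -> enabled M t -> reachable M0 (fire M t).

Definition M_0 : marking := [ffun p => nat_of_bool (is_source p)].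
Definition M_d : marking := [ffun p => nat_of_bool (is_sink p)].

End PN.

From Pilot Require Import Defs.
From mathcomp Require Import all_boot.
From mathcomp Require Import zify.

Set Implicit Arguments. Unset Strict Implicit. Unset Printing Implicit Defensive.

(* Track, along a firing sequence from M_0, the number of times
   c t each transition t has fired; the reached marking M then satisfies the
   state equation  M p + (firings of consumers of p)
                     = M_0 p + (firings of producers of p).
   1. Transitions on a directed cycle never fire from M_0: by FBCF a place
      on a cycle has a unique producer, which lies on the same cycle, and it
      is not a source, so as long as no cycle transition has fired, all
      cycle places are empty and no cycle transition is enabled.
   2. If M_d is reached, the state equation at an inner place equates the
      counts of its producer and consumer, and at a proper source (sink) it
      forces the adjacent transition to fire.  By weak connectivity every
      transition then fires at least once.
   A directed cycle contains a transition, which contradicts 1 and 2.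
   The file develops the state equation, cycles, the FBCF consequences and
   the analysis of the final marking, and ends with the theorem. *)

Lemma connect_last (X : finType) (e : rel X) x y :
  connect e x y -> x != y -> exists2 z, connect e x z & e z y.
Proof.
move=> /connectP[p]; elim/last_ind: p => [|p z _] /=; first by move=> _ ->; rewrite eqxx.
rewrite rcons_path last_rcons => /andP[x_p ez] -> _.
by exists (last x p) => //; apply/connectP; exists p.
Qed.

Section StateEquation.
Variables (P T : finType) (N : petri_net P T).

Lemma producer_not_source p t : p \in post N t -> is_source N p = false.
Proof. by move=> pt; apply/negbTE/set0Pn; exists t; rewrite inE. Qed.

Lemma consumer_not_sink p t : p \in pre N t -> is_sink N p = false.
Proof. by move=> pt; apply/negbTE/set0Pn; exists t; rewrite inE. Qed.

Definition consumed (c : T -> nat) (p : P) : nat := \sum_(u in post_place N p) c u.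
Definition produced (c : T -> nat) (p : P) : nat := \sum_(u in pre_place N p) c u.

Definition state_equation (M0 M : marking P) (c : T -> nat) : Prop :=
  forall p, M p + consumed c p = M0 p + produced c p.

Definition count_one_more (c : T -> nat) (t : T) : T -> nat := fun u => c u + (u == t).

Lemma sum_count_one_more (A : {set T}) c t :
  \sum_(u in A) count_one_more c t u = \sum_(u in A) c u + (t \in A).
Proof.
rewrite big_split /=; congr (_ + _); have [tA|tNA] := boolP (t \in A).
  by rewrite (bigD1 t) //= eqxx big1 // => u /andP[_ /negPf->].
by rewrite big1 // => u uA; case: eqP uA tNA => // ->->.
Qed.

(* Firing an enabled transition preserves the state equation; enabledness
   guarantees that the truncated subtraction in fire is exact. *)
Lemma state_equation_fire M0 M c t :
  state_equation M0 M c -> enabled N M t ->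
  state_equation M0 (fire N M t) (count_one_more c t).
Proof.
move=> eqM /forall_inP en p; have := eqM p.
rewrite /consumed /produced !sum_count_one_more /fire ffunE !inE.
have [p_in|_] := boolP (p \in pre N t); last lia.
by have := en p p_in; lia.
Qed.
End StateEquation.

Section Cycles.
Variables (P T : finType) (N : petri_net P T).

Definition on_cycle (x : P + T) : Prop :=
  exists2 y, Defs.arc N x y & connect (Defs.arc N) y x.

Lemma on_cycle_predecessor x : on_cycle x -> exists2 z, Defs.arc N z x & on_cycle z.
Proof.
move=> [y xy yx]; have y_neq_x : y != x by case: x y xy {yx} => [?|?] [?|?].
have [z yz zx] := connect_last yx y_neq_x.
by exists z => //; exists x => //; apply: connect_trans (connect1 xy) yz.
Qed.

Lemma cycle_transition x : on_cycle x -> exists t, on_cycle (inr t).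
Proof.
case: x => [q|t] cyc; last by exists t.
by have [[//|u] _ cyc_u] := on_cycle_predecessor cyc; exists u.
Qed.
End Cycles.

Section ForwardBackwardConflictFree.
Variables (P T : finType) (N : petri_net P T).
Hypothesis fbcf : FBCF N.

Lemma unique_consumer p u u' : p \in pre N u -> p \in pre N u' -> u = u'.
Proof.
have [_ /card_le1_eqP le1] := fbcf p.
by move=> pu pu'; apply: le1; rewrite inE.
Qed.

Lemma unique_producer p u u' : p \in post N u -> p \in post N u' -> u = u'.
Proof.
have [/card_le1_eqP le1 _] := fbcf p.
by move=> pu pu'; apply: le1; rewrite inE.
Qed.

Lemma consumed_single c p u : p \in pre N u -> consumed N c p = c u.
Proof.
move=> pu; rewrite /consumed (big_pred1 u) // => u'.
by rewrite inE; apply/idP/eqP => [/(unique_consumer pu) ->|->].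
Qed.

Lemma produced_single c p u : p \in post N u -> produced N c p = c u.
Proof.
move=> pu; rewrite /produced (big_pred1 u) // => u'.
by rewrite inE; apply/idP/eqP => [/(unique_producer pu) ->|->].
Qed.

(* On a cycle, the predecessor of a place is its unique producer. *)
Lemma producer_on_cycle q u :
  on_cycle N (inl q) -> q \in post N u -> on_cycle N (inr u).
Proof.
move=> /on_cycle_predecessor[[//|u'] /= qu' cyc_u'] qu.
by rewrite (unique_producer qu qu').
Qed.

Definition cycle_silent (c : T -> nat) : Prop :=
  forall t, on_cycle N (inr t) -> c t = 0.

(* If no cycle transition has fired, every place on a cycle is still empty:
   it was not a source and its only producer lies on the cycle. *)
Lemma cycle_place_empty M c q :
  state_equation N (M_0 N) M c -> cycle_silent c -> on_cycle N (inl q) -> M q = 0.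
Proof.
move=> eqM silent cyc_q; have := eqM q.
have [[//|u] /= qu _] := on_cycle_predecessor cyc_q.
rewrite /M_0 ffunE (producer_not_source qu) /produced big1.
  by rewrite addn0 => /eqP; rewrite addn_eq0 => /andP[/eqP].
by move=> u'; rewrite inE => qu'; apply/silent/(producer_on_cycle cyc_q).
Qed.

(* Hence, starting from M_0, no transition on a cycle can ever fire: each
   one needs a token from an (empty) place of its cycle. *)
Lemma reachable_cycle_silent M : reachable N (M_0 N) M ->
  exists2 c, state_equation N (M_0 N) M c & cycle_silent c.
Proof.
elim=> [|{}M t _ [c eqM silent] en].
  by exists (fun=> 0) => // p; rewrite /consumed /produced !big1.
exists (count_one_more c t); first exact: state_equation_fire.
move=> u cyc_u; rewrite /count_one_more silent //.
case: eqP => [eq_ut|//]; rewrite eq_ut in cyc_u.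
have [[q|//] /= qt cyc_q] := on_cycle_predecessor cyc_u.
by move/forall_inP: en => /(_ q qt); rewrite (cycle_place_empty eqM silent cyc_q).
Qed.

Section FinalMarking.
Variable c : T -> nat.
Hypothesis final : state_equation N (M_0 N) (M_d N) c.

Lemma final_balance p :
  is_sink N p + consumed N c p = is_source N p + produced N c p.
Proof. by have := final p; rewrite !ffunE. Qed.

(* An inner place passes on exactly the tokens it receives, so its producer
   and its consumer fire equally often. *)
Lemma inner_place_balanced p t t' : p \in post N t -> p \in pre N t' -> c t = c t'.
Proof.
move=> pt pt'; have := final_balance p.
rewrite (consumer_not_sink pt') (producer_not_source pt).
by rewrite (consumed_single _ pt') (produced_single _ pt).
Qed.

(* The token of a proper source must be consumed, and a proper sink must
   receive its token: either way some transition fires. *)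
Lemma some_transition_fires :
  (exists p, proper_source N p) \/ (exists p, proper_sink N p) -> exists t, 0 < c t.
Proof.
case=> [[p /andP[src /set0Pn[t]]]|[p /andP[snk /set0Pn[t]]]];
  rewrite inE => pt; exists t; have := final_balance p.
- rewrite src (consumer_not_sink pt) (consumed_single _ pt).
  by rewrite /produced (eqP src) big_set0 add0n => ->.
- rewrite snk (producer_not_source pt) (produced_single _ pt).
  by rewrite /consumed (eqP snk) big_set0 add0n => <-.
Qed.

Definition fired_around (x : P + T) : bool :=
  match x with
  | inr t => 0 < c t
  | inl p => [forall t, (p \in pre N t) || (p \in post N t) ==> (0 < c t)]
  end.

(* Firing spreads along arcs in both directions: through a place it passes
   between its producer and consumer by inner_place_balanced. *)
Lemma fired_around_step x y :
  Defs.arc N x y || Defs.arc N y x -> fired_around x -> fired_around y.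
Proof.
case: x y => [p|t] [q|t'] //= adj; first by move=> /forallP/(_ t')/implyP; apply.
move=> fired_t; apply/forall_inP => t'' adj'; have [->//|ne] := eqVneq t'' t.
case/orP: adj => [pt|pt]; case/orP: adj' => [pt''|pt''].
- by rewrite -(inner_place_balanced pt pt'').
- by rewrite (unique_producer pt'' pt) eqxx in ne.
- by rewrite (unique_consumer pt'' pt) eqxx in ne.
- by rewrite (inner_place_balanced pt'' pt).
Qed.

Lemma all_transitions_fire t0 t :
  weakly_connected N -> 0 < c t0 -> 0 < c t.
Proof.
move=> connected fired_t0.
pose adjacent : rel (P + T) := fun x y => Defs.arc N x y || Defs.arc N y x.
have adjacent_sym : connect_sym adjacent.
  by apply: sym_connect_sym => x y; exact: orbC.
have closed_fired : closed adjacent fired_around.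
  by apply: intro_closed => // x y; exact: fired_around_step.
have := closed_connect closed_fired (connected (inr t0) (inr t)).
by rewrite -!topredE /= fired_t0 => <-.
Qed.
End FinalMarking.
End ForwardBackwardConflictFree.

Theorem mainTheorem6 (P T : finType) (N : petri_net P T) :
  weakly_connected N -> FBCF N -> no_self_loops N ->
  ((exists p : P, proper_source N p) \/ (exists p : P, proper_sink N p)) ->
  reachable N (M_0 N) (M_d N) ->
  acyclic N.
Proof.
move=> connected fbcf _ boundary reach x y xy; apply/negP => yx.
have [c final silent] := reachable_cycle_silent fbcf reach.
have [t0 fired_t0] := some_transition_fires fbcf final boundary.
have [t cyc_t] := cycle_transition (ex_intro2 _ _ y xy yx).
by have := all_transitions_fire fbcf final t connected fired_t0; rewrite silent.
Qed.
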